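(* Let $\Lambda_1,\Lambda_2$ be finite sets of formulas and let $\Gamma_1,\Gamma_2,\Delta_1,\Delta_2$ be finite multisets of formulas such that the sequent $\Gamma_1,\Gamma_2\Rightarrow\Delta_1,\Delta_2$ is provable in $\mathsf{Grz}_\infty$. Then there exists a formula $I$ such that $\mathit{pos}(I)\subseteq\mathit{neg}(\Gamma_1\Rightarrow\Delta_1)\cap\mathit{pos}(\Gamma_2\Rightarrow\Delta_2)$, $\mathit{neg}(I)\subseteq\mathit{pos}(\Gamma_1\Rightarrow\Delta_1)\cap\mathit{neg}(\Gamma_2\Rightarrow\Delta_2)$, and $$\mathsf{Grz}\vdash\bigwedge(\Lambda_1^\ast\cup\Gamma_1)\to\bigvee(\Delta_1\cup\{I\})\quad\text{and}\quad \mathsf{Grz}\vdash\bigwedge(\Lambda_2^\ast\cup\{I\}\cup\Gamma_2)\to\bigvee\Delta_2,$$ where $\Lambda^\ast=\{\Box(A\to\Box A)\mid A\in\Lambda\}$.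
   Context: Formulas are built from $\bot$ and atomic propositions using $\to$ and $\Box$; $\neg A:=A\to\bot$, $\top:=\neg\bot$, $A\wedge B:=\neg(A\to\neg B)$, $A\vee B:=\neg A\to B$, $\Diamond A:=\neg\Box\neg A$; empty conjunction is $\top$ and empty disjunction is $\bot$. The logic $\mathsf{Grz}$ is axiomatized by all Boolean tautologies, $\Box(A\to B)\to(\Box A\to\Box B)$, $\Box A\to\Box\Box A$, $\Box A\to A$, $\Box(\Box(A\to\Box A)\to A)\to\Box A$, with modus ponens and necessitation $A/\Box A$. A sequent is $\Gamma\Rightarrow\Delta$ with $\Gamma,\Delta$ finite multisets of formulas; $\Box\Pi$ denotes $\{\Box B:B\in\Pi\}$. The calculus $\mathsf{Grz}_\infty$ has initial sequents $\Gamma,p\Rightarrow p,\Delta$ ($p$ atomic), $\Gamma,\bot\Rightarrow\Delta$, and rules $(\to_L)$ from $\Gamma,B\Rightarrow\Delta$ and $\Gamma\Rightarrow A,\Delta$ infer $\Gamma,A\to B\Rightarrow\Delta$; $(\to_R)$ from $\Gamma,A\Rightarrow B,\Delta$ infer $\Gamma\Rightarrow A\to B,\Delta$; $(\mathsf{refl})$ from $\Gamma,B,\Box B\Rightarrow\Delta$ infer $\Gamma,\Box B\Rightarrow\Delta$; $(\Box)$ from left premise $\Gamma,\Box\Pi\Rightarrow A,\Delta$ and right premise $\Box\Pi\Rightarrow A$ infer $\Gamma,\Box\Pi\Rightarrow\Box A,\Delta$. An $\infty$-proof is a possibly infinite tree of sequents built by these rules with leaves labelled by initial sequents, in which every infinite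 branch passes through a right premise of $(\Box)$ infinitely often; a sequent is provable if it labels the root of an $\infty$-proof. For a formula or set of formulas $X$, $\mathit{pos}(X)$ ($\mathit{neg}(X)$) is the set of atoms with a positive (negative) occurrence in $X$, polarity being standard: $p$ is positive in $p$, polarity is preserved in $B$ within $A\to B$ and $\Box B$, and reversed in $A$ within $A\to B$. For a sequent, $\mathit{pos}(\Gamma\Rightarrow\Delta)=\mathit{pos}(\Delta)\cup\mathit{neg}(\Gamma)$ and $\mathit{neg}(\Gamma\Rightarrow\Delta)=\mathit{neg}(\Delta)\cup\mathit{pos}(\Gamma)$. *)

From Stdlib Require Import List Permutation Arith.
Import ListNotations.

Inductive formula : Type :=
| Var : nat -> formula
| Bot : formula
| Imp : formula -> formula -> formula
| Box : formula -> formula.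

Definition Neg (A : formula) : formula := Imp A Bot.
Definition Top : formula := Neg Bot.
Definition And (A B : formula) : formula := Neg (Imp A (Neg B)).
Definition Or (A B : formula) : formula := Imp (Neg A) B.
Definition Dia (A : formula) : formula := Neg (Box (Neg A)).

Fixpoint bigwedge (l : list formula) : formula :=
  match l with
  | [] => Top
  | [A] => A
  | A :: l' => And A (bigwedge l')
  end.
Fixpoint bigvee (l : list formula) : formula :=
  match l with
  | [] => Bot
  | [A] => A
  | A :: l' => Or A (bigvee l')
  end.

(* Boolean tautologies: true under every classical valuation that treats
   atoms and boxed formulas as propositional letters. *)
Fixpoint beval (v : formula -> bool) (A : formula) : bool :=
  match A with
  | Var p => v (Var p)
  | Bot => false
  | Imp B C => implb (beval v B) (beval v C)
  | Box B => v (Box B)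
  end.
Definition tautology (A : formula) : Prop := forall v, beval v A = true.

Inductive Grz : formula -> Prop :=
| Grz_taut : forall A, tautology A -> Grz A
| Grz_K : forall A B, Grz (Imp (Box (Imp A B)) (Imp (Box A) (Box B)))
| Grz_4 : forall A, Grz (Imp (Box A) (Box (Box A)))
| Grz_T : forall A, Grz (Imp (Box A) A)
| Grz_grz : forall A,
    Grz (Imp (Box (Imp (Box (Imp A (Box A))) A)) (Box A))
| Grz_mp : forall A B, Grz (Imp A B) -> Grz A -> Grz B
| Grz_nec : forall A, Grz A -> Grz (Box A).

(* Sequents: pairs of finite multisets, represented as lists
   (the rules are stated up to permutation). *)
Definition sequent : Type := (list formula * list formula)%type.

(* One inference step of Grz_infty: conclusion and list of premises, each
   premise tagged with [true] iff it is the right premise of a (Box) rule.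
   Initial sequents are steps with no premises. *)
Inductive step : sequent -> list (bool * sequent) -> Prop :=
| st_ax : forall G D p, In (Var p) G -> In (Var p) D -> step (G, D) []
| st_bot : forall G D, In Bot G -> step (G, D) []
| st_impL : forall G G0 D A B,
    Permutation G (Imp A B :: G0) ->
    step (G, D) [(false, (B :: G0, D)); (false, (G0, A :: D))]
| st_impR : forall G D D0 A B,
    Permutation D (Imp A B :: D0) ->
    step (G, D) [(false, (A :: G, B :: D0))]
| st_refl : forall G G0 D B,
    Permutation G (Box B :: G0) ->
    step (G, D) [(false, (B :: Box B :: G0, D))]
| st_box : forall G G0 Pi D D0 A,
    Permutation G (G0 ++ map Box Pi) ->
    Permutation D (Box A :: D0) ->
    step (G, D) [(false, (G0 ++ map Box Pi, A :: D0));
                 (true, (map Box Pi, [A]))].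

CoInductive ptree : Type :=
| PNode : sequent -> list (bool * ptree) -> ptree.

Definition root (t : ptree) : sequent := match t with PNode s _ => s end.
Definition children (t : ptree) : list (bool * ptree) :=
  match t with PNode _ cs => cs end.

CoInductive locally_correct : ptree -> Prop :=
| lc_node : forall s cs,
    step s (map (fun c => (fst c, root (snd c))) cs) ->
    (forall c, In c cs -> locally_correct (snd c)) ->
    locally_correct (PNode s cs).

Definition infinite_branch (t : ptree) (f : nat -> ptree) (b : nat -> bool) : Prop :=
  f 0 = t /\ forall n, In (b n, f (S n)) (children (f n)).

Definition inf_proof (t : ptree) : Prop :=
  locally_correct t /\
  forall f b, infinite_branch t f b ->
    forall n, exists m, n <= m /\ b m = true.

Definition GrzInf_provable (s : sequent) : Prop :=
  exists t, root t = s /\ inf_proof t.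

Fixpoint pol (b : bool) (A : formula) (p : nat) : Prop :=
  match A with
  | Var q => b = true /\ p = q
  | Bot => False
  | Imp B C => pol (negb b) B p \/ pol b C p
  | Box B => pol b B p
  end.
Definition pos (A : formula) (p : nat) : Prop := pol true A p.
Definition neg (A : formula) (p : nat) : Prop := pol false A p.
Definition posL (X : list formula) (p : nat) : Prop := exists A, In A X /\ pos A p.
Definition negL (X : list formula) (p : nat) : Prop := exists A, In A X /\ neg A p.
Definition posS (s : sequent) (p : nat) : Prop := posL (snd s) p \/ negL (fst s) p.
Definition negS (s : sequent) (p : nat) : Prop := negL (snd s) p \/ posL (fst s) p.

Definition star (A : formula) : formula := Box (Imp A (Box A)).

(* Maehara's method along the oo-proof: every splitting (G1 => D1 | G2 => D2) of a
   provable sequent gets an interpolant.  Axioms, the propositional rules and (refl)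
   combine the interpolants of the premises as usual; since ~I interpolates
   (s2 | s1) for (L2, L1) whenever I interpolates (s1 | s2) for (L1, L2), it suffices
   to treat principal formulas lying in the first component.  For a principal formula
   Box A of a (Box) rule: if A is in L1, the hypothesis Box (A -> Box A) turns A into
   Box A, so the left premise suffices; otherwise the right premise Box Pi => A is split
   with A added to L1, and from an interpolant J of it, Dia J interpolates the
   conclusion, because boxing the first half of J's property gives
   Box (Box (A -> Box A) -> A \/ J), whence Box A \/ Dia J by the Grz axiom.
   The induction is well founded: adding A to L1 or L2 decreases the number of
   subformulas of the root missing from it, and the passage from a node to a child
   other than a right premise of (Box) is well founded, since every infinite branch
   passes through such premises infinitely often. *)

From Stdlib Require Import List Permutation Arith Lia Bool Btauto Classical ClassicalEpsilon.
Import ListNotations.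

Definition formula_eq_dec : forall A B : formula, {A = B} + {A <> B}.
Proof. repeat decide equality. Defined.

(** * Classical validity and derived rules of Grz *)

Lemma beval_bigwedge v l : beval v (bigwedge l) = forallb (beval v) l.
Proof.
  induction l as [|A [|B l] IH]; cbn [bigwedge forallb] in *;
    [reflexivity | now rewrite andb_true_r |].
  cbn [beval And Neg]; rewrite IH.
  now destruct (beval v A), (beval v B && forallb (beval v) l).
Qed.

Lemma beval_bigvee v l : beval v (bigvee l) = existsb (beval v) l.
Proof.
  induction l as [|A [|B l] IH]; cbn [bigvee existsb] in *;
    [reflexivity | now rewrite orb_false_r |].
  cbn [beval Or Neg]; rewrite IH.
  now destruct (beval v A), (beval v B || existsb (beval v) l).
Qed.

Lemma forallb_Permutation {T} (f : T -> bool) l l' :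
  Permutation l l' -> forallb f l = forallb f l'.
Proof.
  induction 1; cbn; [reflexivity | now f_equal | | congruence].
  now rewrite !andb_assoc, (andb_comm (f y)).
Qed.

Lemma existsb_Permutation {T} (f : T -> bool) l l' :
  Permutation l l' -> existsb f l = existsb f l'.
Proof.
  induction 1; cbn; [reflexivity | now f_equal | | congruence].
  now rewrite !orb_assoc, (orb_comm (f y)).
Qed.

(* Derived connectives are unfolded first, so that equal formulas become equal
   Boolean atoms for [btauto]. *)
Ltac solve_tautology :=
  let v := fresh "v" in
  unfold tautology, star, Dia, Or, And, Top, Neg; intro v;
  cbn [beval map app fst snd]; rewrite ?beval_bigwedge, ?beval_bigvee;
  repeat progress (cbn [forallb existsb beval]; rewrite ?forallb_app, ?existsb_app);
  rewrite ?implb_orb; btauto.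

Lemma Grz_mp_taut X Y : Grz X -> tautology (Imp X Y) -> Grz Y.
Proof. intros HX HXY; exact (Grz_mp _ _ (Grz_taut _ HXY) HX). Qed.

Lemma Grz_mp2_taut X1 X2 Y : Grz X1 -> Grz X2 -> tautology (Imp X1 (Imp X2 Y)) -> Grz Y.
Proof. intros H1 H2 H; exact (Grz_mp _ _ (Grz_mp_taut _ _ H1 H) H2). Qed.

Lemma Grz_mp3_taut X1 X2 X3 Y :
  Grz X1 -> Grz X2 -> Grz X3 -> tautology (Imp X1 (Imp X2 (Imp X3 Y))) -> Grz Y.
Proof. intros H1 H2 H3 H; exact (Grz_mp _ _ (Grz_mp2_taut _ _ _ H1 H2 H) H3). Qed.

Lemma Grz_box_taut2 X Y Z :
  tautology (Imp X (Imp Y Z)) -> Grz (Imp (Box X) (Imp (Box Y) (Box Z))).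
Proof.
  intros H. apply (Grz_mp3_taut _ _ _ _ (Grz_nec _ (Grz_taut _ H)) (Grz_K X (Imp Y Z)) (Grz_K Y Z)).
  solve_tautology.
Qed.

Lemma Grz_box_lift C Y :
  Grz (Imp (bigwedge (map Box C)) Y) -> Grz (Imp (bigwedge (map Box C)) (Box Y)).
Proof.
  revert Y; induction C as [|c C IH]; intros Y H.
  - apply (Grz_mp_taut (Box Y)); [apply Grz_nec, (Grz_mp_taut _ _ H)|]; solve_tautology.
  - assert (H' : Grz (Imp (bigwedge (map Box C)) (Imp (Box c) Y)))
      by (apply (Grz_mp_taut _ _ H); solve_tautology).
    apply (Grz_mp3_taut _ _ _ _ (IH _ H') (Grz_K (Box c) Y) (Grz_4 c)); solve_tautology.
Qed.

Lemma Grz_box_lift_star L Pi Y :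
  Grz (Imp (bigwedge (map star L ++ map Box Pi)) Y) ->
  Grz (Imp (bigwedge (map star L ++ map Box Pi)) (Box Y)).
Proof.
  replace (map star L ++ map Box Pi) with (map Box (map (fun A => Imp A (Box A)) L ++ Pi))
    by (now rewrite map_app, map_map).
  apply Grz_box_lift.
Qed.

Definition GrzSeq (G D : list formula) : Prop := Grz (Imp (bigwedge G) (bigvee D)).

Lemma GrzSeq_perm G D G' D' :
  Permutation G G' -> Permutation D D' -> GrzSeq G D -> GrzSeq G' D'.
Proof.
  intros HG HD H; apply (Grz_mp_taut _ _ H); intro v; cbn [beval].
  rewrite !beval_bigwedge, !beval_bigvee, (forallb_Permutation _ _ _ HG),
    (existsb_Permutation _ _ _ HD).
  apply implb_same.
Qed.

Lemma posL_nil p : posL [] p <-> False.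
Proof. unfold posL; cbn; firstorder. Qed.
Lemma negL_nil p : negL [] p <-> False.
Proof. unfold negL; cbn; firstorder. Qed.
Lemma posL_cons A l p : posL (A :: l) p <-> pos A p \/ posL l p.
Proof. unfold posL; cbn; firstorder (subst; auto). Qed.
Lemma negL_cons A l p : negL (A :: l) p <-> neg A p \/ negL l p.
Proof. unfold negL; cbn; firstorder (subst; auto). Qed.
Lemma posL_app l l' p : posL (l ++ l') p <-> posL l p \/ posL l' p.
Proof. unfold posL; setoid_rewrite in_app_iff; firstorder. Qed.
Lemma negL_app l l' p : negL (l ++ l') p <-> negL l p \/ negL l' p.
Proof. unfold negL; setoid_rewrite in_app_iff; firstorder. Qed.
Lemma posL_Permutation l l' p : Permutation l l' -> posL l p <-> posL l' p.
Proof. intros H; unfold posL; now setoid_rewrite H. Qed.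
Lemma negL_Permutation l l' p : Permutation l l' -> negL l p <-> negL l' p.
Proof. intros H; unfold negL; now setoid_rewrite H. Qed.

Definition interpolant_atoms (I : formula) (s1 s2 : sequent) : Prop :=
  (forall p, pos I p -> negS s1 p /\ posS s2 p) /\
  (forall p, neg I p -> posS s1 p /\ negS s2 p).

Definition interpolant (L1 L2 : list formula) (s1 s2 : sequent) (I : formula) : Prop :=
  interpolant_atoms I s1 s2 /\
  GrzSeq (map star L1 ++ fst s1) (snd s1 ++ [I]) /\
  GrzSeq (map star L2 ++ I :: fst s2) (snd s2).

Ltac solve_atoms :=
  unfold interpolant_atoms, posS, negS in *; cbn [fst snd] in *;
  repeat match goal with H : _ /\ _ |- _ => destruct H end;
  split; let q := fresh "q" in intros q;
  repeat match goal with H : forall _ : nat, _ |- _ => specialize (H q) end;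
  repeat progress rewrite ?posL_cons, ?negL_cons, ?posL_app, ?negL_app, ?posL_nil, ?negL_nil in *;
  unfold pos, neg in *; cbn [pol negb Neg Top And Or Dia] in *; intuition (try discriminate).

Lemma interpolant_perm L1 L2 G1 D1 G2 D2 G1' D1' G2' D2' I :
  Permutation G1 G1' -> Permutation D1 D1' -> Permutation G2 G2' -> Permutation D2 D2' ->
  interpolant L1 L2 (G1', D1') (G2', D2') I -> interpolant L1 L2 (G1, D1) (G2, D2) I.
Proof.
  intros HG1 HD1 HG2 HD2 (HI & H1 & H2); cbn [fst snd] in *; split; [|split].
  - unfold interpolant_atoms, posS, negS in *; cbn [fst snd] in *.
    split; intros p; rewrite ?(posL_Permutation _ _ p HG1), ?(negL_Permutation _ _ p HG1),
      ?(posL_Permutation _ _ p HD1), ?(negL_Permutation _ _ p HD1),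
      ?(posL_Permutation _ _ p HG2), ?(negL_Permutation _ _ p HG2),
      ?(posL_Permutation _ _ p HD2), ?(negL_Permutation _ _ p HD2); apply HI.
  - refine (GrzSeq_perm _ _ _ _ _ _ H1); symmetry;
      [apply Permutation_app_head | apply Permutation_app_tail]; assumption.
  - refine (GrzSeq_perm _ _ _ _ _ _ H2); symmetry; [|assumption].
    apply Permutation_app_head, perm_skip; assumption.
Qed.

Lemma interpolant_swap L1 L2 s1 s2 I :
  interpolant L1 L2 s1 s2 I -> interpolant L2 L1 s2 s1 (Neg I).
Proof.
  destruct s1 as [G1 D1], s2 as [G2 D2]; intros (HI & H1 & H2); split; [|split].
  - solve_atoms.
  - apply (Grz_mp_taut _ _ H2); solve_tautology.
  - apply (Grz_mp_taut _ _ H1); solve_tautology.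
Qed.

Lemma interpolant_impL L1 L2 A B G D s2 K1 K2 :
  interpolant L1 L2 (B :: G, D) s2 K1 -> interpolant L1 L2 (G, A :: D) s2 K2 ->
  interpolant L1 L2 (Imp A B :: G, D) s2 (Or K1 K2).
Proof.
  destruct s2 as [G2 D2]; intros (HI1 & H11 & H12) (HI2 & H21 & H22); split; [|split].
  - solve_atoms.
  - apply (Grz_mp2_taut _ _ _ H11 H21); solve_tautology.
  - apply (Grz_mp2_taut _ _ _ H12 H22); solve_tautology.
Qed.

Lemma interpolant_impR L1 L2 A B G D s2 K :
  interpolant L1 L2 (A :: G, B :: D) s2 K -> interpolant L1 L2 (G, Imp A B :: D) s2 K.
Proof.
  destruct s2 as [G2 D2]; intros (HI & H1 & H2); split; [|split].
  - solve_atoms.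
  - apply (Grz_mp_taut _ _ H1); solve_tautology.
  - exact H2.
Qed.

Lemma interpolant_refl L1 L2 B G D s2 K :
  interpolant L1 L2 (B :: Box B :: G, D) s2 K -> interpolant L1 L2 (Box B :: G, D) s2 K.
Proof.
  destruct s2 as [G2 D2]; intros (HI & H1 & H2); split; [|split].
  - solve_atoms.
  - apply (Grz_mp2_taut _ _ _ H1 (Grz_T B)); solve_tautology.
  - exact H2.
Qed.

Lemma interpolant_box_star L1 L2 A G D s2 K :
  In A L1 -> interpolant L1 L2 (G, A :: D) s2 K -> interpolant L1 L2 (G, Box A :: D) s2 K.
Proof.
  destruct s2 as [G2 D2]; intros HA (HI & H1 & H2); split; [|split].
  - solve_atoms.
  - apply in_split in HA as (La & Lb & ->).
    apply (Grz_mp2_taut _ _ _ H1 (Grz_T (Imp A (Box A)))); rewrite map_app; solve_tautology.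
  - exact H2.
Qed.

Lemma interpolant_box L1 L2 A G1 Pi1 D1 G2 Pi2 D2 J :
  interpolant (A :: L1) L2 (map Box Pi1, [A]) (map Box Pi2, []) J ->
  interpolant L1 L2 (G1 ++ map Box Pi1, Box A :: D1) (G2 ++ map Box Pi2, D2) (Dia J).
Proof.
  intros (HI & H1 & H2); split; [|split].
  - solve_atoms.
  - assert (HA : Grz (Imp (bigwedge (map star L1 ++ map Box Pi1))
                         (Box (Imp (star A) (Or A J))))).
    { apply Grz_box_lift_star, (Grz_mp_taut _ _ H1); solve_tautology. }
    assert (HK : Grz (Imp (Box (Imp (star A) (Or A J)))
                          (Imp (Box (Neg J)) (Box (Imp (star A) A)))))
      by (apply Grz_box_taut2; solve_tautology).
    apply (Grz_mp3_taut _ _ _ _ HA HK (Grz_grz A)); solve_tautology.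
  - assert (HJ : Grz (Imp (bigwedge (map star L2 ++ map Box Pi2)) (Box (Neg J)))).
    { apply Grz_box_lift_star, (Grz_mp_taut _ _ H2); solve_tautology. }
    apply (Grz_mp_taut _ _ HJ); solve_tautology.
Qed.

Lemma interpolant_ax_Bot L1 L2 p G D s2 :
  In (Var p) G -> In (Var p) D -> interpolant L1 L2 (G, D) s2 Bot.
Proof.
  destruct s2 as [G2 D2]; intros HG HD.
  apply in_split in HG as (Ga & Gb & ->); apply in_split in HD as (Da & Db & ->).
  split; [|split]; [solve_atoms | apply Grz_taut; solve_tautology ..].
Qed.

Lemma interpolant_ax_Var L1 L2 p G1 D1 G2 D2 :
  In (Var p) G1 -> In (Var p) D2 -> interpolant L1 L2 (G1, D1) (G2, D2) (Var p).
Proof.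
  intros HG HD.
  apply in_split in HG as (Ga & Gb & ->); apply in_split in HD as (Da & Db & ->).
  split; [|split]; [solve_atoms | apply Grz_taut; solve_tautology ..].
Qed.

Lemma interpolant_botL L1 L2 G D s2 : In Bot G -> interpolant L1 L2 (G, D) s2 Bot.
Proof.
  destruct s2 as [G2 D2]; intros HG; apply in_split in HG as (Ga & Gb & ->).
  split; [|split]; [solve_atoms | apply Grz_taut; solve_tautology ..].
Qed.

Definition splits (s s1 s2 : sequent) : Prop :=
  Permutation (fst s) (fst s1 ++ fst s2) /\ Permutation (snd s) (snd s1 ++ snd s2).

Definition interpolable (L1 L2 : list formula) (s : sequent) : Prop :=
  forall s1 s2, splits s s1 s2 -> exists I, interpolant L1 L2 s1 s2 I.

Lemma splits_sym s s1 s2 : splits s s1 s2 -> splits s s2 s1.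
Proof.
  intros [HG HD]; split; (etransitivity; [eassumption | apply Permutation_app_comm]).
Qed.

Lemma interpolable_sym L1 L2 s : interpolable L1 L2 s -> interpolable L2 L1 s.
Proof.
  intros H s1 s2 Hs; destruct (H s2 s1 (splits_sym _ _ _ Hs)) as [I HI].
  exists (Neg I); apply interpolant_swap, HI.
Qed.

(* [P] collects the hypotheses on the premises of a rule and [Q s1] says that its
   principal formula lies in [s1]. *)
Lemma interpolable_wlog (P : list formula -> list formula -> Prop) (Q : sequent -> Prop) s :
  (forall L1 L2, P L1 L2 -> P L2 L1) ->
  (forall s1 s2, splits s s1 s2 -> Q s1 \/ Q s2) ->
  (forall L1 L2 s1 s2, P L1 L2 -> splits s s1 s2 -> Q s1 -> exists I, interpolant L1 L2 s1 s2 I) ->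
  forall L1 L2, P L1 L2 -> interpolable L1 L2 s.
Proof.
  intros Psym Qcases Hside L1 L2 HP s1 s2 Hs.
  destruct (Qcases s1 s2 Hs) as [HQ | HQ]; [exact (Hside _ _ _ _ HP Hs HQ) |].
  destruct (Hside _ _ _ _ (Psym _ _ HP) (splits_sym _ _ _ Hs) HQ) as [I HI].
  exists (Neg I); apply interpolant_swap, HI.
Qed.

Lemma splits_In_fst A G D s1 s2 :
  In A G -> splits (G, D) s1 s2 -> In A (fst s1) \/ In A (fst s2).
Proof. intros HA [HG _]; apply in_app_iff, (Permutation_in _ HG HA). Qed.

Lemma splits_In_snd A G D s1 s2 :
  In A D -> splits (G, D) s1 s2 -> In A (snd s1) \/ In A (snd s2).
Proof. intros HA [_ HD]; apply in_app_iff, (Permutation_in _ HD HA). Qed.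

Lemma Permutation_cons_app_l {T} (a : T) l U V :
  Permutation (a :: l) (U ++ V) -> In a U ->
  exists U', Permutation U (a :: U') /\ Permutation l (U' ++ V).
Proof.
  intros HP Ha; apply in_split in Ha as (U1 & U2 & ->).
  exists (U1 ++ U2); split; [symmetry; apply Permutation_middle |].
  apply (Permutation_cons_inv (a := a)); rewrite HP, <- !app_assoc; cbn.
  symmetry; apply Permutation_middle.
Qed.

Lemma Permutation_cons_app_r {T} (a : T) l U V :
  Permutation (a :: l) (U ++ V) -> In a V ->
  exists V', Permutation V (a :: V') /\ Permutation l (U ++ V').
Proof.
  intros HP Ha; rewrite Permutation_app_comm in HP.
  destruct (Permutation_cons_app_l _ _ _ _ HP Ha) as (V' & HV & Hl).
  exists V'; split; [exact HV | rewrite Hl; apply Permutation_app_comm].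
Qed.

Lemma splits_extract_fst A G G0 D G1 D1 s2 :
  Permutation G (A :: G0) -> splits (G, D) (G1, D1) s2 -> In A G1 ->
  exists U, Permutation G1 (A :: U) /\ splits (G0, D) (U, D1) s2.
Proof.
  intros HG [HG12 HD12] HA; cbn [fst snd] in *.
  destruct (Permutation_cons_app_l A G0 G1 (fst s2)) as (U & HU & HG0);
    [rewrite <- HG; exact HG12 | exact HA |].
  exists U; repeat split; assumption.
Qed.

Lemma splits_extract_snd A G D D0 G1 D1 s2 :
  Permutation D (A :: D0) -> splits (G, D) (G1, D1) s2 -> In A D1 ->
  exists U, Permutation D1 (A :: U) /\ splits (G, D0) (G1, U) s2.
Proof.
  intros HD [HG12 HD12] HA; cbn [fst snd] in *.
  destruct (Permutation_cons_app_l A D0 D1 (snd s2)) as (U & HU & HD0);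
    [rewrite <- HD; exact HD12 | exact HA |].
  exists U; repeat split; assumption.
Qed.

Lemma splits_cons_fst A G D G1 D1 s2 :
  splits (G, D) (G1, D1) s2 -> splits (A :: G, D) (A :: G1, D1) s2.
Proof. intros [HG HD]; split; [apply perm_skip |]; assumption. Qed.

Lemma splits_cons_snd A G D G1 D1 s2 :
  splits (G, D) (G1, D1) s2 -> splits (G, A :: D) (G1, A :: D1) s2.
Proof. intros [HG HD]; split; [| apply perm_skip]; assumption. Qed.

Lemma Permutation_app_map_split {T T'} (f : T -> T') X Pi U V :
  Permutation (X ++ map f Pi) (U ++ V) ->
  exists X1 X2 Pi1 Pi2, Permutation Pi (Pi1 ++ Pi2) /\
    Permutation U (X1 ++ map f Pi1) /\ Permutation V (X2 ++ map f Pi2).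
Proof.
  revert U V; induction Pi as [|y Pi IH]; intros U V HP.
  - exists U, V, [], []; rewrite !app_nil_r; repeat split; reflexivity.
  - rewrite map_cons, <- Permutation_middle in HP.
    destruct (in_app_or U V (f y)) as [Hy | Hy];
      [apply (Permutation_in _ HP); left; reflexivity | |].
    + destruct (Permutation_cons_app_l _ _ _ _ HP Hy) as (U' & HU & HP').
      destruct (IH _ _ HP') as (X1 & X2 & Pi1 & Pi2 & HPi & HU' & HV).
      exists X1, X2, (y :: Pi1), Pi2; repeat split; [now apply perm_skip | | exact HV].
      rewrite HU, HU', map_cons; apply Permutation_middle.
    + destruct (Permutation_cons_app_r _ _ _ _ HP Hy) as (V' & HV & HP').
      destruct (IH _ _ HP') as (X1 & X2 & Pi1 & Pi2 & HPi & HU & HV').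
      exists X1, X2, Pi1, (y :: Pi2); repeat split; [| exact HU |].
      * rewrite HPi; apply Permutation_middle.
      * rewrite HV, HV', map_cons; apply Permutation_middle.
Qed.

Lemma interpolable_ax L1 L2 p G D :
  In (Var p) G -> In (Var p) D -> interpolable L1 L2 (G, D).
Proof.
  intros HG HD; apply (interpolable_wlog (fun _ _ => True) (fun s1 => In (Var p) (fst s1)));
    [tauto | intros s1 s2; exact (splits_In_fst _ _ _ _ _ HG) | | exact I].
  intros L1' L2' [G1 D1] [G2 D2] _ Hs HG1.
  destruct (splits_In_snd _ _ _ _ _ HD Hs) as [HD1 | HD2].
  - exists Bot; apply (interpolant_ax_Bot _ _ p); assumption.
  - exists (Var p); apply interpolant_ax_Var; assumption.
Qed.

Lemma interpolable_botL L1 L2 G D : In Bot G -> interpolable L1 L2 (G, D).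
Proof.
  intros HG; apply (interpolable_wlog (fun _ _ => True) (fun s1 => In Bot (fst s1)));
    [tauto | intros s1 s2; exact (splits_In_fst _ _ _ _ _ HG) | | exact I].
  intros L1' L2' [G1 D1] s2 _ _ HG1; exists Bot; apply interpolant_botL, HG1.
Qed.

Lemma interpolable_impL L1 L2 A B G G0 D :
  Permutation G (Imp A B :: G0) ->
  interpolable L1 L2 (B :: G0, D) -> interpolable L1 L2 (G0, A :: D) ->
  interpolable L1 L2 (G, D).
Proof.
  intros HG H1 H2.
  apply (interpolable_wlog
    (fun L1 L2 => interpolable L1 L2 (B :: G0, D) /\ interpolable L1 L2 (G0, A :: D))
    (fun s1 => In (Imp A B) (fst s1))); [| | | split; assumption].
  - intros ? ? []; split; apply interpolable_sym; assumption.
  - intros s1 s2; apply splits_In_fst; rewrite HG; left; reflexivity.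
  - intros L1' L2' [G1 D1] s2 [H1' H2'] Hs HA.
    destruct (splits_extract_fst _ _ _ _ _ _ _ HG Hs HA) as (U & HU & Hs0).
    destruct (H1' _ _ (splits_cons_fst B _ _ _ _ _ Hs0)) as [K1 HK1].
    destruct (H2' _ _ (splits_cons_snd A _ _ _ _ _ Hs0)) as [K2 HK2].
    exists (Or K1 K2); destruct s2.
    eapply interpolant_perm; [exact HU | reflexivity .. |].
    apply interpolant_impL; eassumption.
Qed.

Lemma interpolable_impR L1 L2 A B G D D0 :
  Permutation D (Imp A B :: D0) ->
  interpolable L1 L2 (A :: G, B :: D0) -> interpolable L1 L2 (G, D).
Proof.
  intros HD H.
  apply (interpolable_wlog (fun L1 L2 => interpolable L1 L2 (A :: G, B :: D0))
    (fun s1 => In (Imp A B) (snd s1))); [| | | assumption].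
  - intros ? ?; apply interpolable_sym.
  - intros s1 s2; apply splits_In_snd; rewrite HD; left; reflexivity.
  - intros L1' L2' [G1 D1] s2 H' Hs HA.
    destruct (splits_extract_snd _ _ _ _ _ _ _ HD Hs HA) as (U & HU & Hs0).
    destruct (H' _ _ (splits_cons_fst A _ _ _ _ _ (splits_cons_snd B _ _ _ _ _ Hs0))) as [K HK].
    exists K; destruct s2.
    eapply interpolant_perm; [reflexivity | exact HU | reflexivity .. |].
    apply interpolant_impR; eassumption.
Qed.

Lemma interpolable_refl L1 L2 B G G0 D :
  Permutation G (Box B :: G0) ->
  interpolable L1 L2 (B :: Box B :: G0, D) -> interpolable L1 L2 (G, D).
Proof.
  intros HG H.
  apply (interpolable_wlog (fun L1 L2 => interpolable L1 L2 (B :: Box B :: G0, D))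
    (fun s1 => In (Box B) (fst s1))); [| | | assumption].
  - intros ? ?; apply interpolable_sym.
  - intros s1 s2; apply splits_In_fst; rewrite HG; left; reflexivity.
  - intros L1' L2' [G1 D1] s2 H' Hs HB.
    destruct (splits_extract_fst _ _ _ _ _ _ _ HG Hs HB) as (U & HU & Hs0).
    destruct (H' _ _ (splits_cons_fst B _ _ _ _ _ (splits_cons_fst (Box B) _ _ _ _ _ Hs0)))
      as [K HK].
    exists K; destruct s2.
    eapply interpolant_perm; [exact HU | reflexivity .. |].
    apply interpolant_refl; eassumption.
Qed.

Lemma interpolable_box L1 L2 A G G0 Pi D D0 :
  Permutation G (G0 ++ map Box Pi) -> Permutation D (Box A :: D0) ->
  interpolable L1 L2 (G0 ++ map Box Pi, A :: D0) ->
  (~ In A L1 -> interpolable (A :: L1) L2 (map Box Pi, [A])) ->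
  (~ In A L2 -> interpolable L1 (A :: L2) (map Box Pi, [A])) ->
  interpolable L1 L2 (G, D).
Proof.
  intros HG HD H0 H1 H2.
  apply (interpolable_wlog
    (fun L1 L2 => interpolable L1 L2 (G0 ++ map Box Pi, A :: D0) /\
       (~ In A L1 -> interpolable (A :: L1) L2 (map Box Pi, [A])) /\
       (~ In A L2 -> interpolable L1 (A :: L2) (map Box Pi, [A])))
    (fun s1 => In (Box A) (snd s1))); [| | | repeat split; assumption].
  - intros ? ? (H0' & H1' & H2'); repeat split; intros;
      apply interpolable_sym; auto.
  - intros s1 s2; apply splits_In_snd; rewrite HD; left; reflexivity.
  - intros L1' L2' [G1 D1] [G2 D2] (H0' & H1' & _) Hs HA.
    destruct (splits_extract_snd _ _ _ _ _ _ _ HD Hs HA) as (U & HU & [HG12 HD12]).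
    cbn [fst snd] in HG12, HD12; rewrite HG in HG12.
    destruct (in_dec formula_eq_dec A L1') as [HAL | HAL].
    + destruct (H0' (G1, A :: U) (G2, D2)) as [K HK].
      { split; cbn; [exact HG12 | now apply perm_skip]. }
      exists K; eapply interpolant_perm; [reflexivity | exact HU | reflexivity .. |].
      apply interpolant_box_star; assumption.
    + destruct (Permutation_app_map_split Box _ _ _ _ HG12)
        as (X1 & X2 & Pi1 & Pi2 & HPi & HX1 & HX2).
      destruct (H1' HAL (map Box Pi1, [A]) (map Box Pi2, [])) as [J HJ].
      { split; cbn; [rewrite HPi, map_app | ]; reflexivity. }
      exists (Dia J); eapply interpolant_perm; [exact HX1 | exact HU | exact HX2 | reflexivity |].
      apply interpolant_box, HJ.
Qed.

(* The right premise of a (Box) step is [(map Box Pi, [A])]. *)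
Lemma step_interpolable L1 L2 s ps :
  step s ps ->
  (forall s', In (false, s') ps -> interpolable L1 L2 s') ->
  (forall s' A, In (true, s') ps -> In A (snd s') -> ~ In A L1 -> interpolable (A :: L1) L2 s') ->
  (forall s' A, In (true, s') ps -> In A (snd s') -> ~ In A L2 -> interpolable L1 (A :: L2) s') ->
  interpolable L1 L2 s.
Proof.
  intros [G D p HG HD | G D HG | G G0 D A B HG | G D D0 A B HD | G G0 D B HG
         | G G0 Pi D D0 A HG HD] Hl Hr1 Hr2.
  - exact (interpolable_ax _ _ _ _ _ HG HD).
  - exact (interpolable_botL _ _ _ _ HG).
  - apply (interpolable_impL _ _ _ _ _ _ _ HG); apply Hl; cbn; auto.
  - apply (interpolable_impR _ _ _ _ _ _ _ HD); apply Hl; cbn; auto.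
  - apply (interpolable_refl _ _ _ _ _ _ HG); apply Hl; cbn; auto.
  - apply (interpolable_box _ _ _ _ _ _ _ _ HG HD);
      [apply Hl | intros; apply Hr1 | intros; apply Hr2]; cbn; auto.
Qed.

(** * Induction along an oo-proof *)

Fixpoint subformulas (A : formula) : list formula :=
  A :: match A with
       | Imp B C => subformulas B ++ subformulas C
       | Box B => subformulas B
       | _ => []
       end.

Lemma subformulas_refl A : In A (subformulas A).
Proof. destruct A; left; reflexivity. Qed.

Lemma subformulas_trans A B C :
  In B (subformulas A) -> In C (subformulas B) -> In C (subformulas A).
Proof.
  induction A as [p | | A1 IH1 A2 IH2 | A1 IH]; cbn; intros [<- | HB] HC;
    auto; try contradiction.
  right; rewrite in_app_iff in *; destruct HB; auto.
Qed.

Definition subformula_closed (Cl : list formula) : Prop :=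
  forall A, In A Cl -> incl (subformulas A) Cl.

Lemma subformula_closed_flat_map l : subformula_closed (flat_map subformulas l).
Proof.
  intros A HA B HB; apply in_flat_map in HA as (C & HC & HA).
  apply in_flat_map; exists C; split; [exact HC | exact (subformulas_trans _ _ _ HA HB)].
Qed.

Lemma subformula_closed_incl Cl l :
  subformula_closed Cl -> incl l Cl -> incl (flat_map subformulas l) Cl.
Proof.
  intros HCl Hl A HA; apply in_flat_map in HA as (B & HB & HA); exact (HCl B (Hl B HB) A HA).
Qed.

Lemma in_flat_map_subformulas A l : In A l -> In A (flat_map subformulas l).
Proof. intros HA; apply in_flat_map; exists A; split; [exact HA | apply subformulas_refl]. Qed.

Lemma step_subformulas s ps b s' :
  step s ps -> In (b, s') ps ->
  incl (fst s' ++ snd s') (flat_map subformulas (fst s ++ snd s)).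
Proof.
  intros Hstep Hin x Hx.
  destruct Hstep as [G D p | G D | G G0 D A B HG | G D D0 A B HD | G G0 D B HG
                    | G G0 Pi D D0 A HG HD]; cbn in Hin;
    repeat destruct Hin as [Hin | Hin]; try contradiction; injection Hin as <- <-;
    cbn [fst snd] in *; rewrite ?HG, ?HD, ?flat_map_app; cbn [flat_map subformulas app];
    rewrite ?flat_map_app in *; repeat progress (rewrite ?in_app_iff in *; cbn [In] in * );
    intuition (subst; auto using in_flat_map_subformulas, subformulas_refl).
Qed.

Fixpoint count_outside (Cl L : list formula) : nat :=
  match Cl with
  | [] => 0
  | A :: Cl' => (if in_dec formula_eq_dec A L then 0 else 1) + count_outside Cl' L
  end.

Lemma count_outside_cons Cl L A :
  ~ In A L -> count_outside Cl L = count_outside Cl (A :: L) + count_occ formula_eq_dec Cl A.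
Proof.
  intros HA; induction Cl as [|B Cl IH]; cbn [count_outside count_occ]; [reflexivity |].
  destruct (in_dec formula_eq_dec B L), (in_dec formula_eq_dec B (A :: L)) as [HB | HB],
    (formula_eq_dec B A); cbn in HB; intuition (subst; first [lia | congruence | tauto]).
Qed.

Lemma count_outside_cons_lt Cl L A :
  In A Cl -> ~ In A L -> count_outside Cl (A :: L) < count_outside Cl L.
Proof.
  intros HCl HL; rewrite (count_outside_cons Cl L A HL).
  apply (count_occ_In formula_eq_dec) in HCl; lia.
Qed.

Lemma inf_proof_child t b c : inf_proof t -> In (b, c) (children t) -> inf_proof c.
Proof.
  intros [Hlc Hbr] Hc; split.
  - destruct t as [s cs]; inversion Hlc as [? ? _ Hcs]; exact (Hcs (b, c) Hc).
  - intros f bs [Hf0 Hf] n.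
    destruct (Hbr (fun k => match k with 0 => t | S k => f k end)
                  (fun k => match k with 0 => b | S k => bs k end)) with (S n) as ([|m] & Hm & Hb).
    + split; [reflexivity |]; intros [|k]; [rewrite Hf0; exact Hc | apply Hf].
    + lia.
    + exists m; split; [lia | exact Hb].
Qed.

Lemma not_Acc_descent {T} (R : T -> T -> Prop) x :
  ~ Acc R x -> exists f : nat -> T, f 0 = x /\ forall n, R (f (S n)) (f n).
Proof.
  intros Hx.
  assert (next : forall y : {y | ~ Acc R y}, {z : {z | ~ Acc R z} | R (proj1_sig z) (proj1_sig y)}).
  { intros [y Hy]; apply constructive_indefinite_description.
    apply NNPP; intros Hno; apply Hy; constructor; intros z Hz.
    apply NNPP; intros Hz'; apply Hno; exists (exist _ z Hz'); exact Hz. }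
  exists (fun n => proj1_sig (Nat.iter n (fun y => proj1_sig (next y)) (exist _ x Hx))).
  split; [reflexivity | intros n; exact (proj2_sig (next _))].
Qed.

Definition unflagged_child (c t : ptree) : Prop := In (false, c) (children t).

Lemma inf_proof_Acc t : inf_proof t -> Acc unflagged_child t.
Proof.
  intros [_ Hbr]; apply NNPP; intros Ht.
  destruct (not_Acc_descent _ _ Ht) as (f & Hf0 & Hf).
  destruct (Hbr f (fun _ => false) (conj Hf0 Hf) 0) as (m & _ & Hm); discriminate.
Qed.

Lemma inf_proof_interpolable Cl L1 L2 t :
  subformula_closed Cl -> inf_proof t -> incl (fst (root t) ++ snd (root t)) Cl ->
  interpolable L1 L2 (root t).
Proof.
  intros HCl; remember (count_outside Cl L1 + count_outside Cl L2) as n eqn:Hn.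
  revert L1 L2 t Hn; induction n as [n IHn] using lt_wf_ind; intros L1 L2 t Hn Ht.
  pose proof (inf_proof_Acc t Ht) as Hacc; revert Ht.
  induction Hacc as [t _ IHt]; intros Ht HtCl.
  destruct t as [s cs]; cbn [root] in *.
  pose proof Ht as [Hlc _]; inversion Hlc as [? ? Hstep _]; subst.
  assert (Hprem : forall b s', In (b, s') (map (fun c => (fst c, root (snd c))) cs) ->
            exists t', s' = root t' /\ In (b, t') cs /\ inf_proof t' /\ incl (fst s' ++ snd s') Cl).
  { intros b s' Hs'; pose proof (step_subformulas _ _ _ _ Hstep Hs') as Hsub.
    apply in_map_iff in Hs' as ([b' t'] & E & Hc); injection E as -> <-.
    exists t'; refine (conj eq_refl (conj Hc (conj (inf_proof_child _ _ _ Ht Hc) _))).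
    exact (incl_tran Hsub (subformula_closed_incl _ _ HCl HtCl)). }
  apply (step_interpolable _ _ _ _ Hstep).
  - intros s' Hs'; destruct (Hprem _ _ Hs') as (t' & -> & Hc & Ht' & Ht'Cl).
    exact (IHt t' Hc Ht' Ht'Cl).
  - intros s' A Hs' HA HAL; destruct (Hprem _ _ Hs') as (t' & -> & _ & Ht' & Ht'Cl).
    pose proof (count_outside_cons_lt Cl L1 A (Ht'Cl A (in_or_app _ _ _ (or_intror HA))) HAL).
    eapply IHn; [| reflexivity | assumption ..]; lia.
  - intros s' A Hs' HA HAL; destruct (Hprem _ _ Hs') as (t' & -> & _ & Ht' & Ht'Cl).
    pose proof (count_outside_cons_lt Cl L2 A (Ht'Cl A (in_or_app _ _ _ (or_intror HA))) HAL).
    eapply IHn; [| reflexivity | assumption ..]; lia.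
Qed.

Theorem lemma7p1 (L1 L2 G1 G2 D1 D2 : list formula) :
  GrzInf_provable (G1 ++ G2, D1 ++ D2) ->
  exists I : formula,
    (forall p, pos I p -> negS (G1, D1) p /\ posS (G2, D2) p) /\
    (forall p, neg I p -> posS (G1, D1) p /\ negS (G2, D2) p) /\
    Grz (Imp (bigwedge (map star L1 ++ G1)) (bigvee (D1 ++ [I]))) /\
    Grz (Imp (bigwedge (map star L2 ++ I :: G2)) (bigvee D2)).
Proof.
  intros (t & Hroot & Ht).
  assert (Hinterp : interpolable L1 L2 (root t)).
  { apply (inf_proof_interpolable (flat_map subformulas ((G1 ++ G2) ++ (D1 ++ D2))));
      [apply subformula_closed_flat_map | exact Ht |].
    rewrite Hroot; intros A HA; exact (in_flat_map_subformulas _ _ HA). }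
  rewrite Hroot in Hinterp.
  destruct (Hinterp (G1, D1) (G2, D2)) as (I & [HP HN] & H1 & H2); [split; reflexivity |].
  exists I; auto.
Qed.
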